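(* Let $\mathcal K$ be a 2-category and $(v,\{\xi_i:s'_iv\to vs_i\}_{0\le i\le2})$ a 1-cell in $\mathsf{Wdl}^{(2)}(\overline{\mathcal K})$ from $\{\lambda_{i,j}:s_js_i\to s_is_j\}$ (on $A$) to $\{\lambda'_{i,j}:s'_js'_i\to s'_is'_j\}$ (on $A'$). Put $\varphi^1_{0,2}:=\bar\lambda_{012}.s_0\eta_1s_2$, ${\varphi'}^1_{0,2}:=\bar\lambda'_{012}.s'_0\eta'_1s'_2$, $\xi_{012}:=v\bar\lambda_{012}.\xi_0s_1s_2.s'_0\xi_1s_2.s'_0s'_1\xi_2$ and $\xi_{02}:=v\bar\lambda_{02}.\xi_0s_2.s'_0\xi_2$. Then the square of 1-cells in $\mathsf{Mnd}(\overline{\mathcal K})$ $((A',1_{1_{A'}}),{\varphi'}^1_{0,2})\circ((v,\bar v),\xi_{012})=((v,\bar v),\xi_{02})\circ((A,1_{1_A}),\varphi^1_{0,2})$, as 1-cells $(A,(s_0s_1s_2,\bar\lambda_{012}))\to(A',(s'_0s'_2,\bar\lambda'_{02}))$, commutes; i.e. $\xi_{012}.{\varphi'}^1_{0,2}v=v\varphi^1_{0,2}.\xi_{02}$.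
   Context: Conventions. For 1-cells, $uw$ is the horizontal composite ($w$ first); for 2-cells $\alpha,\beta$, $\alpha\beta$ is their horizontal composite; a 1-cell next to a 2-cell means whiskering; $\alpha.\beta$ is vertical composition ($\beta$ first). A monad $(A,t)$ has multiplication $\mu:tt\to t$, unit $\eta:1_A\to t$; decorations carry over. Local idempotent closure $\overline{\mathcal K}$: same 0-cells as $\mathcal K$; 1-cells are pairs $(v,\bar v)$ with $v$ a 1-cell of $\mathcal K$ and $\bar v$ an idempotent 2-cell on $v$; 2-cells $(v,\bar v)\to(v',\bar v')$ are 2-cells $\omega:v\to v'$ of $\mathcal K$ with $\bar v'.\omega=\omega=\omega.\bar v$; compositions from $\mathcal K$, identity 2-cell of $(v,\bar v)$ is $\bar v$. Monads $(A,(t,\bar t))$ in $\overline{\mathcal K}$ satisfy $\mu.t\eta=\mu.\eta t=\bar t$; we write just $t$, and $v$ for $(v,\bar v)$. $\mathsf{Mnd}(\overline{\mathcal K})$: 0-cells monads in $\overline{\mathcal K}$; 1-cells $(A,t)\to(A',t')$ are $(v,\psi)$, $\psi:t'v\to vt$ in $\overline{\mathcal K}$, with $\psi.\mu'v=v\mu.\psi t.t'\psi$, $\psi.\eta'v=v\eta$; composite of $(u,\chi)$ followed by $(v,\psi)$ is $(vu,v\chi.\psi u)$. Weak distributive law in $\overline{\mathcal K}$: monads $(A,t),(A,s)$ and $\lambda:ts\to st$ with $\lambda.\mu s=s\mu.\lambda t.t\lambda$, $\lambda.t\mu=\mu t.s\lambda.\lambda s$, $\lambda.\eta s=\mu t.s\lambda.st\eta.s\eta$,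 $\lambda.t\eta=s\mu.\lambda t.\eta st.\eta t$; idempotent $\bar\lambda:=\mu t.s\lambda.st\eta$. $\mathsf{Wdl}(\overline{\mathcal K})$: 1-cells $\lambda\to\lambda'$ are $(v,\xi,\zeta)$ with $(v,\xi),(v,\zeta)$ 1-cells of $\mathsf{Mnd}(\overline{\mathcal K})$ and $v\lambda.\xi s.t'\zeta=v\bar\lambda.\zeta t.s'\xi.\lambda'v$. $\mathsf{Wdl}^{(2)}(\overline{\mathcal K})$: 0-cells are monads $(A,s_0),(A,s_1),(A,s_2)$ with weak distributive laws $\lambda_{i,j}:s_js_i\to s_is_j$ satisfying $\lambda_{0,1}s_2.s_1\lambda_{0,2}.\lambda_{1,2}s_0=s_0\lambda_{1,2}.\lambda_{0,2}s_1.s_2\lambda_{0,1}$; 1-cells are $v$ with $\xi_i:s'_iv\to vs_i$ such that each $(v,\xi_i,\xi_j)$ ($i<j$) is a 1-cell $\lambda_{i,j}\to\lambda'_{i,j}$ of $\mathsf{Wdl}(\overline{\mathcal K})$. $\bar\lambda_{ij}$ is the idempotent of $\lambda_{i,j}$; $\bar\lambda_{012}:=\overleftarrow\lambda_{0,1,2}.\bar\lambda_{01}s_2$ with $\overleftarrow\lambda_{0,1,2}:=s_0s_1\mu_2.s_0\lambda_{1,2}s_2.\lambda_{0,2}s_1s_2.\eta_2s_0s_1s_2$ (similarly with primes). The monads $(s_0s_2,\bar\lambda_{02})$ (multiplication $\mu_0\mu_2.s_0\lambda_{0,2}s_2$, unit $\lambda_{0,2}.\eta_2\eta_0$) and $(s_0s_1s_2,\bar\lambda_{012})$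 (multiplication $\bar\lambda_{012}.\mu_0\mu_1\mu_2.s_0s_0\lambda_{1,2}s_2.s_0\lambda_{0,1}s_2s_1s_2.s_0s_1\lambda_{0,2}s_1s_2$, unit $\bar\lambda_{012}.s_0\lambda_{1,2}.\lambda_{0,2}s_1.s_2\lambda_{0,1}.\eta_2\eta_1\eta_0$) are monads in $\overline{\mathcal K}$, and $((A,1_{1_A}),\varphi^1_{0,2})$, $((v,\bar v),\xi_{012})$, $((v,\bar v),\xi_{02})$ are 1-cells of $\mathsf{Mnd}(\overline{\mathcal K})$ between them. *)

(* Plain Rocq (no library needed): strict 2-categories, presented with total
   composition operations that are only constrained on composable data.
   Conventions (as in the paper):
     comp1 v u = vu      (1-cell u first)
     vcomp a b = a.b     (2-cell b first)
     hcomp a b = ab      (horizontal composite; b on the "first" side). *)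
Set Implicit Arguments.
Unset Strict Implicit.

Record TwoCat := {
  ob : Type; c1 : Type; c2 : Type;
  dom1 : c1 -> ob; cod1 : c1 -> ob;
  src2 : c2 -> c1; tgt2 : c2 -> c1;
  id1 : ob -> c1;
  comp1 : c1 -> c1 -> c1;
  id2 : c1 -> c2;
  vcomp : c2 -> c2 -> c2;
  hcomp : c2 -> c2 -> c2;
  dom1_id1 : forall A, dom1 (id1 A) = A;
  cod1_id1 : forall A, cod1 (id1 A) = A;
  dom1_comp1 : forall v u, cod1 u = dom1 v -> dom1 (comp1 v u) = dom1 u;
  cod1_comp1 : forall v u, cod1 u = dom1 v -> cod1 (comp1 v u) = cod1 v;
  comp1_id1l : forall u, comp1 (id1 (cod1 u)) u = u;
  comp1_id1r : forall u, comp1 u (id1 (dom1 u)) = u;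
  comp1A : forall w v u, cod1 u = dom1 v -> cod1 v = dom1 w ->
    comp1 w (comp1 v u) = comp1 (comp1 w v) u;
  dom1_src_tgt : forall a, dom1 (src2 a) = dom1 (tgt2 a);
  cod1_src_tgt : forall a, cod1 (src2 a) = cod1 (tgt2 a);
  src2_id2 : forall u, src2 (id2 u) = u;
  tgt2_id2 : forall u, tgt2 (id2 u) = u;
  src2_vcomp : forall a b, tgt2 b = src2 a -> src2 (vcomp a b) = src2 b;
  tgt2_vcomp : forall a b, tgt2 b = src2 a -> tgt2 (vcomp a b) = tgt2 a;
  vcompA : forall a b c, tgt2 c = src2 b -> tgt2 b = src2 a ->
    vcomp a (vcomp b c) = vcomp (vcomp a b) c;
  vcomp_id2l : forall a, vcomp (id2 (tgt2 a)) a = a;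
  vcomp_id2r : forall a, vcomp a (id2 (src2 a)) = a;
  src2_hcomp : forall a b, cod1 (src2 b) = dom1 (src2 a) ->
    src2 (hcomp a b) = comp1 (src2 a) (src2 b);
  tgt2_hcomp : forall a b, cod1 (src2 b) = dom1 (src2 a) ->
    tgt2 (hcomp a b) = comp1 (tgt2 a) (tgt2 b);
  hcompA : forall a b c, cod1 (src2 c) = dom1 (src2 b) ->
    cod1 (src2 b) = dom1 (src2 a) ->
    hcomp a (hcomp b c) = hcomp (hcomp a b) c;
  hcomp_id1l : forall a, hcomp (id2 (id1 (cod1 (src2 a)))) a = a;
  hcomp_id1r : forall a, hcomp a (id2 (id1 (dom1 (src2 a)))) = a;
  hcomp_id2 : forall v u, cod1 u = dom1 v ->
    hcomp (id2 v) (id2 u) = id2 (comp1 v u);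
  interchange : forall a a' b b', tgt2 a = src2 a' -> tgt2 b = src2 b' ->
    cod1 (src2 b) = dom1 (src2 a) ->
    hcomp (vcomp a' a) (vcomp b' b) = vcomp (hcomp a' b') (hcomp a b)
}.

Section LocalIdempotentClosure.
Variable K : TwoCat.

Local Notation vc := (@vcomp K).

(* 1-cells of the local idempotent closure: pairs (v, vbar) *)
Record c1b := C1b { cell : c1 K; bar : c2 K }.

Definition comp1b (x y : c1b) : c1b :=
  C1b (@comp1 K (cell x) (cell y)) (@hcomp K (bar x) (bar y)).
Definition id1b (A : ob K) : c1b := C1b (@id1 K A) (@id2 K (@id1 K A)).

Definition is1 (u : c1 K) (A B : ob K) := @dom1 K u = A /\ @cod1 K u = B.
Definition is2 (a : c2 K) (u u' : c1 K) := @src2 K a = u /\ @tgt2 K a = u'.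

Definition wf1b (x : c1b) (A B : ob K) :=
  is1 (cell x) A B /\ is2 (bar x) (cell x) (cell x) /\ vc (bar x) (bar x) = bar x.

Definition hom2b (x y : c1b) (w : c2 K) :=
  is2 w (cell x) (cell y) /\ vc (bar y) w = w /\ vc w (bar x) = w.

Definition wl (x : c1b) (a : c2 K) := @hcomp K (bar x) a.
Definition wr (a : c2 K) (x : c1b) := @hcomp K a (bar x).

Record mnd := Mnd { m0 : ob K; mt : c1b; mmu : c2 K; meta : c2 K }.

Definition is_mnd (M : mnd) :=
  let t := mt M in
  wf1b t (m0 M) (m0 M) /\
  hom2b (comp1b t t) t (mmu M) /\ hom2b (id1b (m0 M)) t (meta M) /\
  vc (mmu M) (wr (mmu M) t) = vc (mmu M) (wl t (mmu M)) /\
  vc (mmu M) (wl t (meta M)) = bar t /\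
  vc (mmu M) (wr (meta M) t) = bar t.

Definition is_wdl (T S : mnd) (l : c2 K) :=
  let t := mt T in let s := mt S in
  m0 T = m0 S /\ is_mnd T /\ is_mnd S /\
  hom2b (comp1b t s) (comp1b s t) l /\
  vc l (wr (mmu T) s) = vc (wl s (mmu T)) (vc (wr l t) (wl t l)) /\
  vc l (wl t (mmu S)) = vc (wr (mmu S) t) (vc (wl s l) (wr l s)) /\
  vc l (wr (meta T) s) =
    vc (wr (mmu S) t) (vc (wl s l) (vc (wl (comp1b s t) (meta S)) (wl s (meta T)))) /\
  vc l (wl t (meta S)) =
    vc (wl s (mmu T)) (vc (wr l t) (vc (wr (meta T) (comp1b s t)) (wr (meta S) t))).

Definition wdl_bar (T S : mnd) (l : c2 K) :=
  vc (wr (mmu S) (mt T)) (vc (wl (mt S) l) (wl (comp1b (mt S) (mt T)) (meta S))).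

Definition is_mnd1 (M M' : mnd) (v : c1b) (psi : c2 K) :=
  wf1b v (m0 M) (m0 M') /\
  hom2b (comp1b (mt M') v) (comp1b v (mt M)) psi /\
  vc psi (wr (mmu M') v) = vc (wl v (mmu M)) (vc (wr psi (mt M)) (wl (mt M') psi)) /\
  vc psi (wr (meta M') v) = wl v (meta M).

(* composite of (u,chi) followed by (w,psi) in Mnd(Kbar) *)
Definition comp_mnd1 (uchi wpsi : c1b * c2 K) : c1b * c2 K :=
  let (u, chi) := uchi in let (w, psi) := wpsi in
  (comp1b w u, vc (wl w chi) (wr psi u)).

Definition is_wdl1 (T S : mnd) (l : c2 K) (T' S' : mnd) (l' : c2 K)
    (v : c1b) (xi zeta : c2 K) :=
  is_mnd1 T T' v xi /\ is_mnd1 S S' v zeta /\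
  vc (wl v l) (vc (wr xi (mt S)) (wl (mt T') zeta)) =
  vc (wl v (wdl_bar T S l)) (vc (wr zeta (mt T)) (vc (wl (mt S') xi) (wr l' v))).

(* 0-cells of Wdl^(2)(Kbar): l_ij : s_j s_i -> s_i s_j, plus Yang-Baxter *)
Definition is_wdl2 (S0 S1 S2 : mnd) (l01 l02 l12 : c2 K) :=
  is_wdl S1 S0 l01 /\ is_wdl S2 S0 l02 /\ is_wdl S2 S1 l12 /\
  vc (wr l01 (mt S2)) (vc (wl (mt S1) l02) (wr l12 (mt S0))) =
  vc (wl (mt S0) l12) (vc (wr l02 (mt S1)) (wl (mt S2) l01)).

Definition is_wdl2_1 (S0 S1 S2 : mnd) (l01 l02 l12 : c2 K)
    (S0' S1' S2' : mnd) (l01' l02' l12' : c2 K) (v : c1b) (x0 x1 x2 : c2 K) :=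
  is_wdl1 S1 S0 l01 S1' S0' l01' v x1 x0 /\
  is_wdl1 S2 S0 l02 S2' S0' l02' v x2 x0 /\
  is_wdl1 S2 S1 l12 S2' S1' l12' v x2 x1.

Definition larrow012 (S0 S1 S2 : mnd) (l02 l12 : c2 K) :=
  let s0 := mt S0 in let s1 := mt S1 in let s2 := mt S2 in
  vc (wl (comp1b s0 s1) (mmu S2))
    (vc (wr (wl s0 l12) s2)
      (vc (wr l02 (comp1b s1 s2)) (wr (meta S2) (comp1b s0 (comp1b s1 s2))))).

Definition lbar012 (S0 S1 S2 : mnd) (l01 l02 l12 : c2 K) :=
  vc (larrow012 S0 S1 S2 l02 l12) (wr (wdl_bar S1 S0 l01) (mt S2)).

Definition phi1_02 (S0 S1 S2 : mnd) (l01 l02 l12 : c2 K) :=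
  vc (lbar012 S0 S1 S2 l01 l02 l12) (wr (wl (mt S0) (meta S1)) (mt S2)).

Definition xi012 (S0 S1 S2 : mnd) (l01 l02 l12 : c2 K) (S0' S1' : mnd)
    (v : c1b) (x0 x1 x2 : c2 K) :=
  vc (wl v (lbar012 S0 S1 S2 l01 l02 l12))
    (vc (wr x0 (comp1b (mt S1) (mt S2)))
      (vc (wr (wl (mt S0') x1) (mt S2)) (wl (comp1b (mt S0') (mt S1')) x2))).

Definition xi02 (S0 S2 : mnd) (l02 : c2 K) (S0' : mnd) (v : c1b) (x0 x2 : c2 K) :=
  vc (wl v (wdl_bar S2 S0 l02)) (vc (wr x0 (mt S2)) (wl (mt S0') x2)).

End LocalIdempotentClosure.

(* Both sides of the square are pasting composites of the structure 2-cells,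
   so the proof is a string-diagram chase. A composite is normalised as a
   vertical stack of layers, each a single generating 2-cell whiskered on both
   sides by the idempotents [bar x] of the neighbouring 1-cells; since every
   generator is a 2-cell of the local idempotent closure these idempotents are
   absorbed, and by interchange two layers acting on disjoint strings commute.
   The chase rests on two facts about [larrow012]: by Yang-Baxter it commutes
   with [l01 s2] up to exchanging [s0] and [s1], and it is idempotent. With
   them, [larrow012 . l01 s2] absorbs [s1 lbar02], and after [s1 l02] also
   [lbar12 s0]. Hence [phi1_02] absorbs [lbar02], and the [xi_i] carry the
   [larrow'] coming from [phi'1_02] across [v], where it is absorbed. *)

From Pilot Require Import Defs.
From Stdlib Require Import List.
Import ListNotations.
Set Implicit Arguments.
Unset Strict Implicit.

Section Chains.
Variable K : TwoCat.
Notation C1 := (c1 K). Notation C2 := (c2 K). Notation OB := (ob K).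
Notation vc := (@vcomp K). Notation hc := (@hcomp K).

(* Chains list their last 1-cell first: [chain X [y; x] Z] composes [x] then [y]. *)
Inductive chain : OB -> list (c1b K) -> OB -> Prop :=
| chain_nil X : chain X [] X
| chain_cons X l Y x Z : chain X l Y -> wf1b x Y Z -> chain X (x :: l) Z.

Definition chain_cell (X : OB) (l : list (c1b K)) : C1 :=
  fold_right (fun x acc => comp1 (cell x) acc) (id1 X) l.
Definition chain_bar (X : OB) (l : list (c1b K)) : C2 :=
  fold_right (fun x acc => hc (bar x) acc) (id2 (id1 X)) l.

Lemma chain_ends X l Y : chain X l Y -> dom1 (chain_cell X l) = X /\ cod1 (chain_cell X l) = Y.
Proof.
  induction 1 as [X|X l Y x Z P IH W]; simpl.
  - rewrite dom1_id1, cod1_id1; auto.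
  - destruct W as [[W1 W2] _]. destruct IH as [I1 I2].
    rewrite dom1_comp1, cod1_comp1; try congruence. auto.
Qed.

Lemma chain_bar_spec X l Y : chain X l Y ->
  src2 (chain_bar X l) = chain_cell X l /\ tgt2 (chain_bar X l) = chain_cell X l /\
  vc (chain_bar X l) (chain_bar X l) = chain_bar X l.
Proof.
  induction 1 as [X|X l Y x Z P IH W]; simpl.
  - pose proof (vcomp_id2l (id2 (id1 X))) as E; rewrite tgt2_id2 in E.
    rewrite src2_id2, tgt2_id2, E. auto.
  - destruct IH as [I1 [I2 I3]]. destruct W as [[W1 W2] [[W3 W4] W5]].
    pose proof (chain_ends P) as [P1 P2].
    assert (Hc : cod1 (src2 (chain_bar X l)) = dom1 (src2 (bar x))) by congruence.
    rewrite src2_hcomp, tgt2_hcomp by assumption.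
    rewrite <- interchange by congruence.
    rewrite W5, I3. split; [congruence|]. split; [congruence|auto].
Qed.

Definition hom2c X Y (a : C2) S T :=
  chain X S Y /\ chain X T Y /\ src2 a = chain_cell X S /\ tgt2 a = chain_cell X T /\
  vc (chain_bar X T) a = a /\ vc a (chain_bar X S) = a.

Lemma chain_app X S' Z S Y : chain X S' Z -> chain Z S Y -> chain X (S ++ S') Y.
Proof.
  intros P1 P2; induction P2; simpl; auto. econstructor; eauto.
Qed.

Lemma chain_cell_app X S' Z S Y : chain X S' Z -> chain Z S Y ->
  chain_cell X (S ++ S') = comp1 (chain_cell Z S) (chain_cell X S').
Proof.
  intros P1 P2; induction P2 as [Z|Z l Y x W P IH Wf]; simpl.
  - destruct (chain_ends P1) as [_ H2]. rewrite <- H2. now rewrite comp1_id1l.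
  - rewrite (IH P1). destruct Wf as [[W1 W2] _].
    destruct (chain_ends P1) as [A1 A2]. destruct (chain_ends P) as [B1 B2].
    rewrite comp1A; congruence.
Qed.

Lemma chain_bar_app X S' Z S Y : chain X S' Z -> chain Z S Y ->
  chain_bar X (S ++ S') = hc (chain_bar Z S) (chain_bar X S').
Proof.
  intros P1 P2; induction P2 as [Z|Z l Y x W P IH Wf]; simpl.
  - destruct (chain_ends P1) as [_ H2]. destruct (chain_bar_spec P1) as [H3 _].
    rewrite <- H2. rewrite <- H3. now rewrite hcomp_id1l.
  - rewrite (IH P1). destruct Wf as [[W1 W2] [[W3 W4] _]].
    destruct (chain_ends P1) as [A1 A2]. destruct (chain_ends P) as [B1 B2].
    destruct (chain_bar_spec P1) as [C1 _]. destruct (chain_bar_spec P) as [D1 _].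
    rewrite hcompA; congruence.
Qed.

Lemma hom2c_vcomp X Y a b S T U : hom2c X Y a T U -> hom2c X Y b S T -> hom2c X Y (vc a b) S U.
Proof.
  intros [P1 [P2 [A1 [A2 [A3 A4]]]]] [Q1 [Q2 [B1 [B2 [B3 B4]]]]].
  destruct (chain_bar_spec P2) as [C1 [C2 _]]. destruct (chain_bar_spec Q1) as [D1 [D2 _]].
  assert (E : tgt2 b = src2 a) by congruence.
  repeat split; try assumption.
  - rewrite src2_vcomp; auto.
  - rewrite tgt2_vcomp; auto.
  - rewrite vcompA by congruence. now rewrite A3.
  - rewrite <- vcompA by congruence. now rewrite B4.
Qed.

Lemma hom2c_hcomp X Z Y a b S T S' T' : hom2c Z Y a S T -> hom2c X Z b S' T' ->
  hom2c X Y (hc a b) (S ++ S') (T ++ T').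
Proof.
  intros [P1 [P2 [A1 [A2 [A3 A4]]]]] [Q1 [Q2 [B1 [B2 [B3 B4]]]]].
  destruct (chain_ends P1) as [E1 E2]. destruct (chain_ends Q1) as [F1 F2].
  destruct (chain_ends P2) as [E3 E4]. destruct (chain_ends Q2) as [F3 F4].
  destruct (chain_bar_spec P1) as [G1 [G2 _]]. destruct (chain_bar_spec Q1) as [H1 [H2 _]].
  destruct (chain_bar_spec P2) as [G3 [G4 _]]. destruct (chain_bar_spec Q2) as [H3 [H4 _]].
  assert (Hc : cod1 (src2 b) = dom1 (src2 a)) by congruence.
  repeat split.
  - eapply chain_app; eauto.
  - eapply chain_app; eauto.
  - rewrite src2_hcomp by auto. rewrite A1, B1. erewrite chain_cell_app; eauto.
  - rewrite tgt2_hcomp by auto. rewrite A2, B2. erewrite chain_cell_app; eauto.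
  - erewrite chain_bar_app by eauto. rewrite <- interchange by congruence.
    now rewrite A3, B3.
  - erewrite chain_bar_app by eauto. rewrite <- interchange by congruence.
    now rewrite A4, B4.
Qed.

Lemma hom2c_chain_bar X S Y : chain X S Y -> hom2c X Y (chain_bar X S) S S.
Proof.
  intros P. destruct (chain_bar_spec P) as [A [B C]]. repeat split; auto.
Qed.

Lemma hom2c_id X : hom2c X X (id2 (id1 X)) [] [].
Proof. apply (hom2c_chain_bar (chain_nil X)). Qed.

Lemma chain_cell1 x X Y : wf1b x X Y -> chain_cell X [x] = cell x.
Proof. intros [[W1 _] _]. simpl. rewrite <- W1. apply comp1_id1r. Qed.

Lemma chain_bar1 x X Y : wf1b x X Y -> chain_bar X [x] = bar x.
Proof. intros [[W1 _] [[W3 _] _]]. simpl. rewrite <- W1, <- W3. apply hcomp_id1r. Qed.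

Lemma hom2c_bar x X Y : wf1b x X Y -> hom2c X Y (bar x) [x] [x].
Proof.
  intros W. pose proof (chain_cons (chain_nil X) W) as P.
  pose proof (chain_cell1 W) as E1. pose proof (chain_bar1 W) as E2.
  destruct W as [_ [[W3 W4] W5]].
  repeat split; auto; congruence.
Qed.

Lemma hom2c_conv X Y a S T S' T' : hom2c X Y a S T -> S = S' -> T = T' -> hom2c X Y a S' T'.
Proof. intros; subst; auto. Qed.

Lemma hom2c_src X Y a S T : hom2c X Y a S T -> src2 a = chain_cell X S.
Proof. intros [_ [_ [H _]]]; exact H. Qed.
Lemma hom2c_tgt X Y a S T : hom2c X Y a S T -> tgt2 a = chain_cell X T.
Proof. intros [_ [_ [_ [H _]]]]; exact H. Qed.
Lemma hom2c_dom X Y a S T : hom2c X Y a S T -> dom1 (src2 a) = X.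
Proof. intros [P [_ [H _]]]. rewrite H. apply (chain_ends P). Qed.
Lemma hom2c_cod X Y a S T : hom2c X Y a S T -> cod1 (src2 a) = Y.
Proof. intros [P [_ [H _]]]. rewrite H. apply (chain_ends P). Qed.
Lemma hom2c_absl X Y a S T : hom2c X Y a S T -> vc (chain_bar X T) a = a.
Proof. intros [_ [_ [_ [_ [H _]]]]]; exact H. Qed.
Lemma hom2c_absr X Y a S T : hom2c X Y a S T -> vc a (chain_bar X S) = a.
Proof. intros [_ [_ [_ [_ [_ H]]]]]; exact H. Qed.
Lemma hom2c_chain_src X Y a S T : hom2c X Y a S T -> chain X S Y.
Proof. intros [H _]; exact H. Qed.
Lemma hom2c_chain_tgt X Y a S T : hom2c X Y a S T -> chain X T Y.
Proof. intros [_ [H _]]; exact H. Qed.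

Lemma hom2c_vcomp_eq X Y a b S T T' U : hom2c X Y a T U -> hom2c X Y b S T' -> T' = T ->
  hom2c X Y (vc a b) S U.
Proof. intros A B E; subst; eapply hom2c_vcomp; eauto. Qed.

Lemma hom2c_id1l X Y a S T : hom2c X Y a S T -> hc (id2 (id1 Y)) a = a.
Proof. intros H. rewrite <- (hom2c_cod H). apply hcomp_id1l. Qed.
Lemma hom2c_id1r X Y a S T : hom2c X Y a S T -> hc a (id2 (id1 X)) = a.
Proof. intros H. rewrite <- (hom2c_dom H). apply hcomp_id1r. Qed.

End Chains.

Ltac chain_auto :=
  lazymatch goal with
  | |- chain _ (_ :: _) _ => eapply chain_cons; [chain_auto | eassumption]
  | |- chain _ [] _ => apply chain_nil
  | |- chain _ (_ ++ _) _ => eapply chain_app; [chain_auto | chain_auto]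
  | _ => eassumption
  end.

Ltac chain_eq := repeat rewrite <- app_assoc; simpl; reflexivity.

Ltac hom2c_auto :=
  lazymatch goal with
  | |- hom2c _ _ (vcomp _ _) _ _ => eapply hom2c_vcomp_eq; [hom2c_auto | hom2c_auto | chain_eq]
  | |- hom2c _ _ (hcomp _ _) _ _ => eapply hom2c_hcomp; [hom2c_auto | hom2c_auto]
  | |- hom2c _ _ (chain_bar _ _) _ _ => eapply hom2c_chain_bar; chain_auto
  | |- hom2c _ _ (bar _) _ _ => eapply hom2c_bar; eassumption
  | |- hom2c _ _ (id2 (id1 _)) _ _ => apply hom2c_id
  | _ => eassumption
  end.

Ltac hom2c_auto_conv := eapply hom2c_conv; [hom2c_auto | chain_eq | chain_eq].

Ltac side_cond :=
  lazymatch goal with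
  | |- tgt2 ?p = src2 ?q =>
      let Hp := fresh in let Hq := fresh in
      eassert (Hp : hom2c _ _ p _ _) by hom2c_auto; eassert (Hq : hom2c _ _ q _ _) by hom2c_auto;
      rewrite (hom2c_tgt Hp), (hom2c_src Hq); clear Hp Hq; f_equal; chain_eq
  | |- cod1 (src2 ?p) = dom1 (src2 ?q) =>
      let Hp := fresh in let Hq := fresh in
      eassert (Hp : hom2c _ _ p _ _) by hom2c_auto; eassert (Hq : hom2c _ _ q _ _) by hom2c_auto;
      rewrite (hom2c_cod Hp), (hom2c_dom Hq); clear Hp Hq; reflexivity
  end.

Section Diagrams.
Variable K : TwoCat.
Notation C2 := (c2 K). Notation OB := (ob K).
Notation vc := (@vcomp K). Notation hc := (@hcomp K).

(* [Lay L a R] is [a] whiskered by the chains [L] and [R]; a diagram lists its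
   last layer first and is evaluated from the identity [chain_bar X S] of its
   source. *)
Record layer := Lay { lay_left : list (c1b K); lay_cell : C2; lay_right : list (c1b K) }.

Definition whisker_chain (L : list (c1b K)) (c : C2) : C2 :=
  fold_right (fun x acc => hc (bar x) acc) c L.
Definition eval_layer (X : OB) (ly : layer) : C2 :=
  whisker_chain (lay_left ly) (hc (lay_cell ly) (chain_bar X (lay_right ly))).
Definition eval_diag (X : OB) (S : list (c1b K)) (D : list layer) : C2 :=
  fold_right (fun ly acc => vc (eval_layer X ly) acc) (chain_bar X S) D.

Definition hom2l X Y ly S T := exists Z W Sa Ta,
  hom2c Z W (lay_cell ly) Sa Ta /\ chain X (lay_right ly) Z /\ chain W (lay_left ly) Y /\
  S = lay_left ly ++ Sa ++ lay_right ly /\ T = lay_left ly ++ Ta ++ lay_right ly.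

Inductive hom2d X Y : list (c1b K) -> list layer -> list (c1b K) -> Prop :=
| hom2d_nil S : chain X S Y -> hom2d X Y S [] S
| hom2d_cons S D T ly U : hom2d X Y S D T -> hom2l X Y ly T U -> hom2d X Y S (ly :: D) U.

Lemma whisker_chain_eq W L Y c X S T : chain W L Y -> hom2c X W c S T ->
  whisker_chain L c = hc (chain_bar W L) c.
Proof.
  intros P Hc. induction P as [W|W l Y' x Z P IH Wf]; simpl.
  - symmetry. eapply hom2c_id1l; eauto.
  - rewrite (IH Hc). rewrite hcompA; [reflexivity| side_cond | side_cond].
Qed.

Lemma eval_layer_hom2c X Y ly S T : hom2l X Y ly S T -> hom2c X Y (eval_layer X ly) S T.
Proof.
  intros [Z [W [Sa [Ta [Ha [PR [PL [E1 E2]]]]]]]]. subst. destruct ly as [L a R]; simpl in *.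
  unfold eval_layer; simpl.
  assert (H1 : hom2c X W (hc a (chain_bar X R)) (Sa ++ R) (Ta ++ R)) by hom2c_auto.
  erewrite whisker_chain_eq by eauto. hom2c_auto.
Qed.

Lemma eval_diag_hom2c X Y S D T : hom2d X Y S D T -> hom2c X Y (eval_diag X S D) S T.
Proof.
  induction 1 as [S P| S D T ly U HD IH HL]; simpl.
  - apply hom2c_chain_bar; auto.
  - apply eval_layer_hom2c in HL. eapply hom2c_vcomp; eauto.
Qed.

Lemma eval_diag_app X Y S T U D1 D2 : hom2d X Y T D1 U -> hom2d X Y S D2 T ->
  eval_diag X S (D1 ++ D2) = vc (eval_diag X T D1) (eval_diag X S D2).
Proof.
  intros H1 H2. pose proof (eval_diag_hom2c H2) as I2.
  induction H1 as [T P| T' D T ly U HD IH HL]; simpl.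
  - symmetry. eapply hom2c_absl; eauto.
  - rewrite (IH H2 I2). apply eval_layer_hom2c in HL. pose proof (eval_diag_hom2c HD).
    rewrite vcompA; [reflexivity|side_cond|side_cond].
Qed.

Lemma hom2d_app X Y S T U D1 D2 : hom2d X Y T D1 U -> hom2d X Y S D2 T -> hom2d X Y S (D1 ++ D2) U.
Proof.
  intros H1 H2; induction H1; simpl; auto. econstructor; eauto.
Qed.

Definition whisker_layer L R ly := Lay (L ++ lay_left ly) (lay_cell ly) (lay_right ly ++ R).

Lemma hom2l_whisker X0 Y0 ly S T X Y L R : hom2l X0 Y0 ly S T -> chain X R X0 -> chain Y0 L Y ->
  hom2l X Y (whisker_layer L R ly) (L ++ S ++ R) (L ++ T ++ R).
Proof.
  intros [Z [W [Sa [Ta [Ha [PR [PL [E1 E2]]]]]]]] P1 P2. subst.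
  exists Z, W, Sa, Ta; unfold whisker_layer; simpl.
  refine (conj Ha (conj _ (conj _ (conj _ _)))).
  - eapply chain_app; eauto.
  - eapply chain_app; eauto.
  - chain_eq.
  - chain_eq.
Qed.

Lemma hom2d_whisker X0 Y0 S D T X Y L R : hom2d X0 Y0 S D T -> chain X R X0 -> chain Y0 L Y ->
  hom2d X Y (L ++ S ++ R) (map (whisker_layer L R) D) (L ++ T ++ R).
Proof.
  intros HD P1 P2; induction HD; simpl.
  - constructor. repeat (eapply chain_app; eauto).
  - econstructor; eauto. eapply hom2l_whisker; eauto.
Qed.

Lemma whisker_chain_app L1 L2 c :
  whisker_chain (L1 ++ L2) c = whisker_chain L1 (whisker_chain L2 c).
Proof. unfold whisker_chain; apply fold_right_app. Qed.

Lemma whisker_chain_hcomp Z W Y L c d S T X S' T' : hom2c Z W c S T -> hom2c X Z d S' T' ->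
  chain W L Y ->
  whisker_chain L (hc c d) = hc (whisker_chain L c) d.
Proof.
  intros Hc Hd P.
  assert (hom2c X W (hc c d) (S ++ S') (T ++ T')) by hom2c_auto.
  erewrite (whisker_chain_eq P) by eauto. erewrite (whisker_chain_eq P Hc).
  rewrite hcompA; [reflexivity|side_cond|side_cond].
Qed.

Lemma whisker_chain_vcomp Z W Y L c d S T U : hom2c Z W c T U -> hom2c Z W d S T -> chain W L Y ->
  whisker_chain L (vc c d) = vc (whisker_chain L c) (whisker_chain L d).
Proof.
  intros Hc Hd P.
  assert (hom2c Z W (vc c d) S U) by hom2c_auto.
  erewrite (whisker_chain_eq P) by eauto. erewrite (whisker_chain_eq P Hc).
  erewrite (whisker_chain_eq P Hd).
  pose proof (chain_bar_spec P) as [_ [_ I]].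
  rewrite <- I at 1. rewrite interchange; [reflexivity|side_cond|side_cond|side_cond].
Qed.

Lemma whisker_r_vcomp Z W X R c d S T U : hom2c Z W c T U -> hom2c Z W d S T -> chain X R Z ->
  hc (vc c d) (chain_bar X R) = vc (hc c (chain_bar X R)) (hc d (chain_bar X R)).
Proof.
  intros Hc Hd P.
  pose proof (chain_bar_spec P) as [_ [_ I]].
  rewrite <- I at 1. rewrite interchange; [reflexivity|side_cond|side_cond|side_cond].
Qed.

Lemma eval_diag_whisker X0 Y0 S0 M T0 X Y L R : hom2d X0 Y0 S0 M T0 -> chain X R X0 ->
  chain Y0 L Y ->
  eval_diag X (L ++ S0 ++ R) (map (whisker_layer L R) M) =
  whisker_chain L (hc (eval_diag X0 S0 M) (chain_bar X R)).
Proof.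
  intros HM PR PL. induction HM as [S P| S D T ly U HD IH HL]; simpl.
  - assert (hom2c X Y0 (hc (chain_bar X0 S) (chain_bar X R)) (S ++ R) (S ++ R)) by hom2c_auto.
    erewrite (whisker_chain_eq PL) by eauto.
    erewrite chain_bar_app; [| eapply chain_app; eauto | eauto].
    erewrite chain_bar_app; eauto.
  - rewrite IH. pose proof (eval_diag_hom2c HD) as ID. pose proof (eval_layer_hom2c HL) as IL.
    destruct HL as [Z [W [Sa [Ta [Ha [PR' [PL' [E1 E2]]]]]]]].
    destruct ly as [L' a R']; simpl in *. subst.
    unfold eval_layer at 1. unfold whisker_layer; simpl. rewrite whisker_chain_app.
    erewrite (chain_bar_app PR PR').
    assert (E : hc a (hc (chain_bar X0 R') (chain_bar X R)) =
                hc (hc a (chain_bar X0 R')) (chain_bar X R)).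
    { rewrite hcompA; [reflexivity|side_cond|side_cond]. }
    rewrite E. clear E.
    assert (hom2c X0 W (hc a (chain_bar X0 R')) (Sa ++ R') (Ta ++ R')) by hom2c_auto.
    erewrite (whisker_chain_hcomp H (hom2c_chain_bar PR) PL').
    fold (eval_layer X0 (Lay L' a R')).
    assert (hom2c X Y0 (hc (eval_layer X0 (Lay L' a R')) (chain_bar X R))
              ((L' ++ Sa ++ R') ++ R) ((L' ++ Ta ++ R') ++ R)) by hom2c_auto.
    assert (hom2c X Y0 (hc (eval_diag X0 S D) (chain_bar X R))
              (S ++ R) ((L' ++ Sa ++ R') ++ R)) by hom2c_auto.
    erewrite <- whisker_chain_vcomp; eauto.
    f_equal. symmetry. eapply whisker_r_vcomp; eauto.
Qed.

End Diagrams.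

Section DiagramRewriting.
Variable K : TwoCat.
Notation C2 := (c2 K).
Notation vc := (@vcomp K). Notation hc := (@hcomp K).

Lemma eval_diag_rewrite X Y S D V n (L R : list (c1b K)) X0 Y0 S0 T0 (M M' : list (layer K)) :
  eval_diag X0 S0 M = eval_diag X0 S0 M' -> hom2d X0 Y0 S0 M T0 -> hom2d X0 Y0 S0 M' T0 ->
  chain X R X0 -> chain Y0 L Y ->
  hom2d X Y S (skipn (n + length M) D) (L ++ S0 ++ R) ->
  hom2d X Y (L ++ T0 ++ R) (firstn n D) V ->
  firstn (length M) (skipn n D) = map (whisker_layer L R) M ->
  eval_diag X S D =
  eval_diag X S (firstn n D ++ map (whisker_layer L R) M' ++ skipn (n + length M) D).
Proof.
  intros E HM HM' PR PL HQ HP Hseg.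
  assert (ED : D = firstn n D ++ map (whisker_layer L R) M ++ skipn (n + length M) D).
  { rewrite <- Hseg. rewrite <- (firstn_skipn n D) at 1. f_equal.
    rewrite <- (firstn_skipn (length M) (skipn n D)) at 1. f_equal.
    rewrite skipn_skipn. f_equal. apply PeanoNat.Nat.add_comm. }
  rewrite ED at 1.
  pose proof (hom2d_whisker HM PR PL) as W1. pose proof (hom2d_whisker HM' PR PL) as W2.
  rewrite (eval_diag_app HP (hom2d_app W1 HQ)), (eval_diag_app W1 HQ).
  rewrite (eval_diag_app HP (hom2d_app W2 HQ)), (eval_diag_app W2 HQ).
  rewrite (eval_diag_whisker HM PR PL), (eval_diag_whisker HM' PR PL), E. reflexivity.
Qed.

Lemma eval_diag_interchange Z W (a : C2) (Sa Ta : list (c1b K)) X0 Z' (b : C2) Sb Tb M0 :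
  hom2c Z W a Sa Ta -> hom2c X0 Z' b Sb Tb -> chain Z' M0 Z ->
  eval_diag X0 (Sa ++ M0 ++ Sb) [Lay [] a (M0 ++ Tb); Lay (Sa ++ M0) b []] =
  eval_diag X0 (Sa ++ M0 ++ Sb) [Lay (Ta ++ M0) b []; Lay [] a (M0 ++ Sb)].
Proof.
  intros Ha Hb P.
  pose proof (hom2c_chain_src Ha) as PSa. pose proof (hom2c_chain_tgt Ha) as PTa.
  pose proof (hom2c_chain_src Hb) as PSb. pose proof (hom2c_chain_tgt Hb) as PTb.
  assert (Eb : forall L Y, chain Z' L Y -> eval_layer X0 (Lay L b []) = hc (chain_bar Z' L) b).
  { intros L Y PL. unfold eval_layer; simpl lay_left; simpl lay_cell; simpl lay_right.
    change (chain_bar X0 []) with (id2 (id1 X0)). rewrite (hom2c_id1r Hb).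
    eapply whisker_chain_eq; eauto. }
  assert (Ea : forall R, eval_layer X0 (Lay [] a R) = hc a (chain_bar X0 R)) by reflexivity.
  change (vc (eval_layer X0 (Lay [] a (M0 ++ Tb)))
            (vc (eval_layer X0 (Lay (Sa ++ M0) b [])) (chain_bar X0 (Sa ++ M0 ++ Sb)))
        = vc (eval_layer X0 (Lay (Ta ++ M0) b []))
            (vc (eval_layer X0 (Lay [] a (M0 ++ Sb))) (chain_bar X0 (Sa ++ M0 ++ Sb)))).
  rewrite (Eb (Sa ++ M0) W) by chain_auto. rewrite (Eb (Ta ++ M0) W) by chain_auto.
  rewrite !Ea.
  assert (H1 : hom2c X0 W (hc (chain_bar Z' (Sa ++ M0)) b) (Sa ++ M0 ++ Sb) (Sa ++ M0 ++ Tb))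
    by hom2c_auto_conv.
  assert (H2 : hom2c X0 W (hc a (chain_bar X0 (M0 ++ Sb))) (Sa ++ M0 ++ Sb) (Ta ++ M0 ++ Sb))
    by hom2c_auto_conv.
  rewrite (hom2c_absr H1), (hom2c_absr H2).
  rewrite (chain_bar_app P PSa), (chain_bar_app P PTa).
  rewrite (chain_bar_app PTb P), (chain_bar_app PSb P).
  pose proof (chain_bar_spec P) as [_ [_ IM]].
  pose proof (hom2c_absl Ha) as Aa1. pose proof (hom2c_absr Ha) as Aa2.
  pose proof (hom2c_absl Hb) as Ab1. pose proof (hom2c_absr Hb) as Ab2.
  set (BM := chain_bar Z' M0) in *. set (BSa := chain_bar Z Sa) in *.
  set (BTa := chain_bar Z Ta) in *.
  set (BSb := chain_bar X0 Sb) in *. set (BTb := chain_bar X0 Tb) in *.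
  assert (TBM : hom2c Z' Z BM M0 M0) by (apply hom2c_chain_bar; auto).
  assert (TBSa : hom2c Z W BSa Sa Sa) by (apply hom2c_chain_bar; auto).
  assert (TBTa : hom2c Z W BTa Ta Ta) by (apply hom2c_chain_bar; auto).
  assert (TBSb : hom2c X0 Z' BSb Sb Sb) by (apply hom2c_chain_bar; auto).
  assert (TBTb : hom2c X0 Z' BTb Tb Tb) by (apply hom2c_chain_bar; auto).
  clearbody BM BSa BTa BSb BTb.
  transitivity (hc a (hc BM b)).
  - rewrite <- (hcompA (a:=BSa)) by side_cond.
    rewrite <- (@interchange K BSa a (hc BM b) (hc BM BTb)) by side_cond.
    rewrite <- (@interchange K BM BM b BTb) by side_cond.
    rewrite Aa2, IM, Ab1. reflexivity.
  - rewrite <- (hcompA (a:=BTa)) by side_cond.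
    rewrite <- (@interchange K a BTa (hc BM BSb) (hc BM b)) by side_cond.
    rewrite <- (@interchange K BM BM BSb b) by side_cond.
    rewrite Aa1, IM, Ab2. reflexivity.
Qed.

Lemma eval_diag_bar (x : c1b K) X0 Y0 : wf1b x X0 Y0 ->
  eval_diag X0 [x] [Lay [] (bar x) []] = eval_diag X0 [x] [].
Proof.
  intros W. change (vc (chain_bar X0 [x]) (chain_bar X0 [x]) = chain_bar X0 [x]).
  apply (chain_bar_spec (chain_cons (chain_nil X0) W)).
Qed.

Lemma reify_atom X Y (a : C2) S T : hom2c X Y a S T -> a = eval_diag X S [Lay [] a []].
Proof.
  intros H. change (a = vc (hc a (id2 (id1 X))) (chain_bar X S)).
  rewrite (hom2c_id1r H). symmetry; apply (hom2c_absr H).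
Qed.

Lemma reify_vcomp X Y S T U a b Da Db : a = eval_diag X T Da -> b = eval_diag X S Db ->
  hom2d X Y T Da U -> hom2d X Y S Db T -> vc a b = eval_diag X S (Da ++ Db).
Proof. intros -> -> H1 H2. symmetry; apply (eval_diag_app H1 H2). Qed.

Lemma reify_bar_l X Y Y' S T a D (x : c1b K) : a = eval_diag X S D -> hom2d X Y S D T ->
  wf1b x Y Y' ->
  hc (bar x) a = eval_diag X (x :: S) (map (whisker_layer [x] []) D).
Proof.
  intros -> HD W.
  pose proof (eval_diag_whisker HD (chain_nil X) (chain_cons (chain_nil Y) W)) as E.
  rewrite app_nil_r in E. simpl in E. rewrite E.
  change (chain_bar X []) with (id2 (id1 X)). rewrite (hom2c_id1r (eval_diag_hom2c HD)).
  reflexivity.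
Qed.

Lemma reify_bar_r X X' Y S T a D (x : c1b K) : a = eval_diag X S D -> hom2d X Y S D T ->
  wf1b x X' X ->
  hc a (bar x) = eval_diag X' (S ++ [x]) (map (whisker_layer [] [x]) D).
Proof.
  intros -> HD W.
  pose proof (eval_diag_whisker HD (chain_cons (chain_nil X') W) (chain_nil Y)) as E.
  simpl in E. rewrite E.
  change (chain_bar X' []) with (id2 (id1 X')). rewrite (hom2c_id1r (hom2c_bar W)). reflexivity.
Qed.

Lemma reify_id1l X Y S T a D : a = eval_diag X S D -> hom2d X Y S D T ->
  hc (id2 (id1 Y)) a = eval_diag X S D.
Proof. intros -> HD. apply (hom2c_id1l (eval_diag_hom2c HD)). Qed.

Lemma reify_id1r X Y S T a D : a = eval_diag X S D -> hom2d X Y S D T ->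
  hc a (id2 (id1 X)) = eval_diag X S D.
Proof. intros -> HD. apply (hom2c_id1r (eval_diag_hom2c HD)). Qed.

Lemma reify_hcompA_l Z1 Z2 Z3 Z4 p q a Sp Tp Sq Tq Sa Ta E :
  hom2c Z3 Z4 p Sp Tp -> hom2c Z2 Z3 q Sq Tq -> hom2c Z1 Z2 a Sa Ta ->
  hc p (hc q a) = E -> hc (hc p q) a = E.
Proof. intros Hp Hq Ha <-. rewrite hcompA; [reflexivity|side_cond|side_cond]. Qed.

Lemma reify_hcompA_r Z1 Z2 Z3 Z4 p q a Sp Tp Sq Tq Sa Ta E :
  hom2c Z3 Z4 a Sa Ta -> hom2c Z2 Z3 p Sp Tp -> hom2c Z1 Z2 q Sq Tq ->
  hc (hc a p) q = E -> hc a (hc p q) = E.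
Proof. intros Ha Hp Hq <-. rewrite hcompA; [reflexivity|side_cond|side_cond]. Qed.

End DiagramRewriting.

Ltac hom2l_auto := eexists; eexists; eexists; eexists; cbn [lay_cell lay_left lay_right];
  split; [hom2c_auto | split; [chain_auto | split; [chain_auto | split; [chain_eq | chain_eq]]]].

Ltac diag_simpl :=
  cbn [firstn skipn map app lay_left lay_cell lay_right length Nat.add];
  unfold whisker_layer; cbn [app lay_left lay_cell lay_right].

Ltac hom2d_auto := diag_simpl;
  lazymatch goal with
  | |- hom2d _ _ _ [] _ => apply hom2d_nil; chain_auto
  | |- hom2d _ _ _ (_ :: _) _ => eapply hom2d_cons; [hom2d_auto | hom2l_auto]
  end.

Ltac reify :=
  lazymatch goal with
  | |- vcomp ?a ?b = _ => eapply reify_vcomp; [reify | reify | hom2d_auto | hom2d_auto]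
  | |- hcomp (id2 (id1 _)) ?a = _ => eapply reify_id1l; [reify | hom2d_auto]
  | |- hcomp ?a (id2 (id1 _)) = _ => eapply reify_id1r; [reify | hom2d_auto]
  | |- hcomp (bar ?x) ?a = _ => eapply reify_bar_l; [reify | hom2d_auto | eassumption]
  | |- hcomp ?a (bar ?x) = _ => eapply reify_bar_r; [reify | hom2d_auto | eassumption]
  | |- hcomp ?a (hcomp ?p ?q) = _ =>
      eapply reify_hcompA_r; [hom2c_auto | hom2c_auto | hom2c_auto | reify]
  | |- hcomp (hcomp ?p ?q) ?a = _ =>
      eapply reify_hcompA_l; [hom2c_auto | hom2c_auto | hom2c_auto | reify]
  | |- ?a = _ => eapply reify_atom; hom2c_auto
  end.

Ltac reify_eq := etransitivity; [reify | reflexivity].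

(* [rw_diag n L R E] rewrites with [E : eval_diag _ _ M = eval_diag _ _ M'] the
   block of layers of the goal starting at position [n], which must be [M]
   whiskered by [L] and [R]; [slide n] exchanges layers [n] and [n+1] when they
   act on disjoint strings; [rm_bar n] deletes an identity layer [bar x]. *)
Tactic Notation "rw_diag" constr(n) uconstr(L) uconstr(R) uconstr(E) :=
  etransitivity; [ eapply (eval_diag_rewrite (n:=n) (L:=L) (R:=R) E);
    [hom2d_auto | hom2d_auto | chain_auto | chain_auto | hom2d_auto | hom2d_auto | reflexivity]
  | diag_simpl ].

Ltac slide_fwd n :=
  lazymatch goal with |- eval_diag ?X ?S ?D = _ =>
  let l := eval cbn [firstn skipn] in (firstn 2 (skipn n D)) in
  lazymatch l with
  | [Lay ?L ?a ?R1; Lay ?L2 ?b ?R2] =>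
     let Ha := fresh "Ha" in let Hb := fresh "Hb" in
     eassert (Ha : hom2c _ _ a _ _) by hom2c_auto; eassert (Hb : hom2c _ _ b _ _) by hom2c_auto;
     lazymatch type of Ha with hom2c _ _ _ ?Sa ?Ta =>
       let M0 := eval cbn [skipn length Nat.add app] in (skipn (length L + length Sa) L2) in
       rw_diag n L R2 (eval_diag_interchange (M0 := M0) Ha Hb ltac:(chain_auto)); clear Ha Hb
     end
  end end.

Ltac slide_bwd n :=
  lazymatch goal with |- eval_diag ?X ?S ?D = _ =>
  let l := eval cbn [firstn skipn] in (firstn 2 (skipn n D)) in
  lazymatch l with
  | [Lay ?L1 ?b ?R1; Lay ?L2 ?a ?R2] =>
     let Ha := fresh "Ha" in let Hb := fresh "Hb" in
     eassert (Ha : hom2c _ _ a _ _) by hom2c_auto; eassert (Hb : hom2c _ _ b _ _) by hom2c_auto;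
     lazymatch type of Ha with hom2c _ _ _ ?Sa ?Ta =>
       let M0 := eval cbn [skipn length Nat.add app] in (skipn (length L2 + length Ta) L1) in
       rw_diag n L2 R1 (eq_sym (eval_diag_interchange (M0 := M0) Ha Hb ltac:(chain_auto)));
       clear Ha Hb
     end
  end end.

Ltac slide n := first [slide_fwd n | slide_bwd n].

Ltac rm_bar n :=
  lazymatch goal with |- eval_diag ?X ?S ?D = _ =>
  let l := eval cbn [firstn skipn] in (firstn 1 (skipn n D)) in
  lazymatch l with
  | [Lay ?L (bar ?x) ?R] =>
     let Hx := fresh in
     eassert (Hx : wf1b x _ _) by eassumption;
     rw_diag n L R (eval_diag_bar Hx); clear Hx
  end end.

Arguments eval_diag : simpl never.
Arguments eval_layer : simpl never.
Arguments chain_bar : simpl never.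
Arguments chain_cell : simpl never.
Arguments whisker_chain : simpl never.

Section Generators.
Variable K : TwoCat.
Notation C2 := (c2 K). Notation OB := (ob K).
Notation vc := (@vcomp K). Notation hc := (@hcomp K).

Lemma hom2b_hom2c (x y : c1b K) a X Y S T : hom2b x y a -> chain X S Y -> chain X T Y ->
  chain_cell X S = cell x -> chain_bar X S = bar x ->
  chain_cell X T = cell y -> chain_bar X T = bar y ->
  hom2c X Y a S T.
Proof.
  intros [[H1 H2] [H3 H4]] P1 P2 E1 E2 E3 E4. repeat split; auto; congruence.
Qed.

Lemma chain_cell2 (x y : c1b K) X Z Y : wf1b x Z Y -> wf1b y X Z ->
  chain_cell X [x;y] = comp1 (cell x) (cell y).
Proof. intros W1 W2. change (comp1 (cell x) (chain_cell X [y]) = comp1 (cell x) (cell y)).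
  now rewrite (chain_cell1 W2). Qed.
Lemma chain_bar2 (x y : c1b K) X Z Y : wf1b x Z Y -> wf1b y X Z ->
  chain_bar X [x;y] = hc (bar x) (bar y).
Proof. intros W1 W2. change (hc (bar x) (chain_bar X [y]) = hc (bar x) (bar y)).
  now rewrite (chain_bar1 W2). Qed.

Ltac hom2b_auto := eapply hom2b_hom2c; [eassumption | chain_auto | chain_auto | .. ];
  first [ reflexivity | eapply chain_cell1; eassumption | eapply chain_bar1; eassumption
        | eapply chain_cell2; eassumption | eapply chain_bar2; eassumption ].

Lemma mnd_hom2c (A : OB) (t : c1b K) (m e : C2) : is_mnd (Mnd A t m e) ->
  wf1b t A A /\ hom2c A A m [t;t] [t] /\ hom2c A A e [] [t].
Proof.
  intros [W [Hm [He _]]]. simpl in *. split; [exact W|]. split; hom2b_auto.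
Qed.

Lemma mnd_diag_eqs (A : OB) (t : c1b K) (m e : C2) : is_mnd (Mnd A t m e) ->
  eval_diag A [t;t;t] [Lay [] m []; Lay [] m [t]] =
    eval_diag A [t;t;t] [Lay [] m []; Lay [t] m []] /\
  eval_diag A [t] [Lay [] m []; Lay [t] e []] = eval_diag A [t] [Lay [] (bar t) []] /\
  eval_diag A [t] [Lay [] m []; Lay [] e [t]] = eval_diag A [t] [Lay [] (bar t) []].
Proof.
  intros HM. destruct (mnd_hom2c HM) as [W [Tm Te]].
  destruct HM as [_ [_ [_ [E1 [E2 E3]]]]]. simpl in *. unfold wl, wr in *.
  split; [|split].
  - transitivity (vc m (hc m (bar t))); [symmetry; reify_eq|]. rewrite E1. reify_eq.
  - transitivity (vc m (hc (bar t) e)); [symmetry; reify_eq|]. rewrite E2. reify_eq.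
  - transitivity (vc m (hc e (bar t))); [symmetry; reify_eq|]. rewrite E3. reify_eq.
Qed.

Variables (A : OB) (t s : c1b K) (m e n h l : C2).

Lemma wdl_hom2c : is_wdl (Mnd A t m e) (Mnd A s n h) l ->
  wf1b t A A /\ wf1b s A A /\ hom2c A A m [t;t] [t] /\ hom2c A A e [] [t] /\
  hom2c A A n [s;s] [s] /\ hom2c A A h [] [s] /\ hom2c A A l [t;s] [s;t].
Proof.
  intros HW. destruct HW as [_ [HT [HS [Hl _]]]].
  destruct (mnd_hom2c HT) as [Wt [Tm Te]]. destruct (mnd_hom2c HS) as [Ws [Tn Th]].
  simpl in *. refine (conj Wt (conj Ws (conj Tm (conj Te (conj Tn (conj Th _)))))). hom2b_auto.
Qed.

Lemma wdl_diag_eqs : is_wdl (Mnd A t m e) (Mnd A s n h) l ->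
  eval_diag A [t;t;s] [Lay [] l []; Lay [] m [s]] =
    eval_diag A [t;t;s] [Lay [s] m []; Lay [] l [t]; Lay [t] l []] /\
  eval_diag A [t;s;s] [Lay [] l []; Lay [t] n []] =
    eval_diag A [t;s;s] [Lay [] n [t]; Lay [s] l []; Lay [] l [s]] /\
  eval_diag A [s] [Lay [] l []; Lay [] e [s]] =
    eval_diag A [s] [Lay [] n [t]; Lay [s] l []; Lay [s;t] h []; Lay [s] e []] /\
  eval_diag A [t] [Lay [] l []; Lay [t] h []] =
    eval_diag A [t] [Lay [s] m []; Lay [] l [t]; Lay [] e [s;t]; Lay [] h [t]].
Proof.
  intros HW. destruct (wdl_hom2c HW) as [Wt [Ws [Tm [Te [Tn [Th Tl]]]]]].
  destruct HW as [_ [_ [_ [_ [E1 [E2 [E3 E4]]]]]]]. simpl in *. unfold wl, wr, comp1b in *.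
  simpl in *.
  split; [|split; [|split]].
  - transitivity (vc l (hc m (bar s))); [symmetry; reify_eq|]. rewrite E1. reify_eq.
  - transitivity (vc l (hc (bar t) n)); [symmetry; reify_eq|]. rewrite E2. reify_eq.
  - transitivity (vc l (hc e (bar s))); [symmetry; reify_eq|]. rewrite E3. reify_eq.
  - transitivity (vc l (hc (bar t) h)); [symmetry; reify_eq|]. rewrite E4. reify_eq.
Qed.

End Generators.

Section WeakDistributiveLaw.
Variable K : TwoCat.
Variables (A : ob K) (t s : c1b K) (m e n h l : c2 K).
Hypothesis HW : is_wdl (Mnd A t m e) (Mnd A s n h) l.

Ltac wdl_facts :=
  destruct (wdl_hom2c HW) as [Wt [Ws [Tm [Te [Tn [Th Tl]]]]]];
  destruct (wdl_diag_eqs HW) as [W1 [W2 [W3 W4]]];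
  let HT := fresh in let HS := fresh in
  destruct HW as [_ [HT [HS _]]];
  destruct (mnd_diag_eqs HT) as [At [Ult Urt]]; destruct (mnd_diag_eqs HS) as [As [Uls Urs]].

Lemma wdl_bar_mul_natural :
  eval_diag A [s;t;t] [Lay [] n [t]; Lay [s] l []; Lay [s;t] h []; Lay [s] m []] =
  eval_diag A [s;t;t] [Lay [s] m []; Lay [] n [t;t]; Lay [s] l [t]; Lay [s;t] h [t]].
Proof.
  wdl_facts.
  slide 2. rw_diag 1 [s] [] W1. slide 0.
  rw_diag 3 [s;t] [] W4. slide 2. slide 1.
  rw_diag 0 [s] [] (eq_sym At). slide 1.
  rw_diag 2 [s] [t] (eq_sym W1).
  rw_diag 3 [s] [s;t] Ult. rm_bar 3. reflexivity.
Qed.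

Lemma wdl_bar_alt :
  eval_diag A [s;t] [Lay [] n [t]; Lay [s] l []; Lay [s;t] h []] =
  eval_diag A [s;t] [Lay [s] m []; Lay [] l [t]; Lay [] e [s;t]].
Proof.
  wdl_facts. symmetry.
  rw_diag 1 [] [t] W3. rw_diag 0 [] [] (eq_sym wdl_bar_mul_natural).
  rw_diag 3 [s] [] Urt. rm_bar 3. reflexivity.
Qed.

Lemma wdl_mul_bar_absorb :
  eval_diag A [t;s;t] [Lay [s] m []; Lay [] l [t]; Lay [t] n [t]; Lay [t;s] l []; Lay [t;s;t] h []] =
  eval_diag A [t;s;t] [Lay [s] m []; Lay [] l [t]].
Proof.
  wdl_facts.
  rw_diag 2 [t] [] wdl_bar_alt. slide 1. rw_diag 0 [s] [] (eq_sym At).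
  rw_diag 1 [] [t] (eq_sym W1). rw_diag 2 [] [s;t] Ult. rm_bar 2. reflexivity.
Qed.

End WeakDistributiveLaw.

Section ThreeMonads.
Variable K : TwoCat.
Variables (A : ob K) (t0 t1 t2 : c1b K) (m0 e0 m1 e1 m2 e2 l01 l02 l12 : c2 K).
Hypothesis H : is_wdl2 (Mnd A t0 m0 e0) (Mnd A t1 m1 e1) (Mnd A t2 m2 e2) l01 l02 l12.

Definition larrow_diag : list (layer K) :=
  [Lay [t0;t1] m2 []; Lay [t0] l12 [t2]; Lay [] l02 [t1;t2]; Lay [] e2 [t0;t1;t2]].
Definition larrow102_diag : list (layer K) :=
  [Lay [t1;t0] m2 []; Lay [t1] l02 [t2]; Lay [] l12 [t0;t2]; Lay [] e2 [t1;t0;t2]].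

Lemma yang_baxter_diag :
  eval_diag A [t2;t1;t0] [Lay [] l01 [t2]; Lay [t1] l02 []; Lay [] l12 [t0]] =
  eval_diag A [t2;t1;t0] [Lay [t0] l12 []; Lay [] l02 [t1]; Lay [t2] l01 []].
Proof.
  destruct H as [H01 [H02 [H12 YB]]].
  destruct (wdl_hom2c H01) as [Wt1 [Wt0 [Tm1 [Te1 [Tm0 [Te0 Tl01]]]]]].
  destruct (wdl_hom2c H02) as [Wt2 [_ [Tm2 [Te2 [_ [_ Tl02]]]]]].
  destruct (wdl_hom2c H12) as [_ [_ [_ [_ [_ [_ Tl12]]]]]].
  simpl in YB. unfold wl, wr in YB.
  transitivity (vcomp (hcomp l01 (bar t2)) (vcomp (hcomp (bar t1) l02) (hcomp l12 (bar t0))));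
    [symmetry; reify_eq|]. rewrite YB. reify_eq.
Qed.

Ltac wdl2_facts :=
  let H01 := fresh "H01" in let H02 := fresh "H02" in let H12 := fresh "H12" in
  destruct H as [H01 [H02 [H12 _]]];
  destruct (wdl_hom2c H01) as [Wt1 [Wt0 [Tm1 [Te1 [Tm0 [Te0 Tl01]]]]]];
  destruct (wdl_hom2c H02) as [Wt2 [_ [Tm2 [Te2 [_ [_ Tl02]]]]]];
  destruct (wdl_hom2c H12) as [_ [_ [_ [_ [_ [_ Tl12]]]]]];
  destruct (wdl_diag_eqs H01) as [W1_01 [W2_01 [W3_01 W4_01]]];
  destruct (wdl_diag_eqs H02) as [W1_02 [W2_02 [W3_02 W4_02]]];
  destruct (wdl_diag_eqs H12) as [W1_12 [W2_12 [W3_12 W4_12]]];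
  pose proof (wdl_bar_alt H12) as Bar12; pose proof (wdl_mul_bar_absorb H02) as MulBar02;
  let HM2 := fresh in destruct H02 as [_ [HM2 _]];
  destruct (mnd_diag_eqs HM2) as [At2 [Ult2 Urt2]];
  pose proof yang_baxter_diag as YB.

Lemma larrow_lambda01 :
  eval_diag A [t1;t0;t2] (larrow_diag ++ [Lay [] l01 [t2]]) =
  eval_diag A [t1;t0;t2] (Lay [] l01 [t2] :: larrow102_diag).
Proof.
  wdl2_facts. unfold larrow_diag, larrow102_diag; diag_simpl.
  slide 3. rw_diag 1 [] [t2] (eq_sym YB). slide 0. reflexivity.
Qed.

Lemma lambda02_12_mul2 :
  eval_diag A [t2;t2;t0;t1] [Lay [t0] l12 []; Lay [] l02 [t1]; Lay [] m2 [t0;t1]] =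
  eval_diag A [t2;t2;t0;t1]
    [Lay [t0;t1] m2 []; Lay [t0] l12 [t2]; Lay [] l02 [t1;t2]; Lay [t2;t0] l12 [];
     Lay [t2] l02 [t1]].
Proof.
  wdl2_facts. rw_diag 1 [] [t1] W1_02. rw_diag 0 [t0] [] W1_12. slide 2. reflexivity.
Qed.

Lemma larrow_mul2 :
  eval_diag A [t0;t1;t2;t2] (larrow_diag ++ [Lay [t0;t1] m2 []]) =
  eval_diag A [t0;t1;t2;t2] (Lay [t0;t1] m2 [] :: map (whisker_layer [] [t2]) larrow_diag).
Proof.
  wdl2_facts. unfold larrow_diag; diag_simpl.
  slide 3. slide 2. slide 1. rw_diag 0 [t0;t1] [] (eq_sym At2). reflexivity.
Qed.

Lemma larrow_idem :
  eval_diag A [t0;t1;t2] (larrow_diag ++ larrow_diag) = eval_diag A [t0;t1;t2] larrow_diag.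
Proof.
  wdl2_facts. pose proof larrow_mul2 as LL. unfold larrow_diag in *; diag_simpl.
  rw_diag 0 [] [] LL. slide 4. slide 5. rw_diag 1 [] [t2] (eq_sym lambda02_12_mul2).
  rw_diag 3 [] [t0;t1;t2] Urt2. rm_bar 3. reflexivity.
Qed.

Lemma larrow_lambda01_bar02 :
  eval_diag A [t1;t0;t2]
    (larrow_diag ++ [Lay [] l01 [t2]; Lay [t1] m0 [t2]; Lay [t1;t0] l02 [];
                     Lay [t1;t0;t2] e0 []]) =
  eval_diag A [t1;t0;t2] (larrow_diag ++ [Lay [] l01 [t2]]).
Proof.
  wdl2_facts. pose proof larrow_lambda01 as LC.
  unfold larrow_diag, larrow102_diag in *; diag_simpl.
  rw_diag 0 [] [] LC. slide 4. slide 3. slide 5. slide 4. slide 6. slide 5.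
  rw_diag 1 [t1] [] MulBar02. rw_diag 0 [] [] (eq_sym LC). reflexivity.
Qed.

Lemma phi1_02_bar02 :
  eval_diag A [t0;t2]
    (larrow_diag ++ [Lay [] m0 [t1;t2]; Lay [t0] l01 [t2]; Lay [t0;t1] e0 [t2];
                     Lay [t0] e1 [t2]; Lay [] m0 [t2]; Lay [t0] l02 []; Lay [t0;t2] e0 []]) =
  eval_diag A [t0;t2]
    (larrow_diag ++ [Lay [] m0 [t1;t2]; Lay [t0] l01 [t2]; Lay [t0;t1] e0 [t2];
                     Lay [t0] e1 [t2]]).
Proof.
  wdl2_facts. pose proof larrow_lambda01_bar02 as QC. unfold larrow_diag in *; diag_simpl.
  rw_diag 4 [] [t2] (eq_sym W3_01). slide 5. slide 6. slide 7.
  rw_diag 0 [] [] QC. rw_diag 4 [] [t2] W3_01. reflexivity.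
Qed.

Lemma larrow_lambda01_02_bar12 :
  eval_diag A [t1;t2;t0]
    (larrow_diag ++ [Lay [] l01 [t2]; Lay [t1] l02 []; Lay [] m1 [t2;t0]; Lay [t1] l12 [t0];
                     Lay [t1;t2] e1 [t0]]) =
  eval_diag A [t1;t2;t0] (larrow_diag ++ [Lay [] l01 [t2]; Lay [t1] l02 []]).
Proof.
  wdl2_facts. pose proof larrow_lambda01 as LC. pose proof larrow_idem as L3.
  unfold larrow_diag, larrow102_diag in *; diag_simpl.
  rw_diag 6 [] [t0] Bar12. rw_diag 5 [t1] [] W1_02. slide 7. slide 8.
  rw_diag 4 [] [] (eq_sym LC). rw_diag 0 [] [] L3. reflexivity.
Qed.

Lemma larrow_lambda01_mul2_bar02 :
  eval_diag A [t1;t0;t2;t2]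
    (larrow_diag ++ [Lay [] l01 [t2]; Lay [t1;t0] m2 []; Lay [t1] m0 [t2;t2];
                     Lay [t1;t0] l02 [t2]; Lay [t1;t0;t2] e0 [t2]]) =
  eval_diag A [t1;t0;t2;t2] (larrow_diag ++ [Lay [] l01 [t2]; Lay [t1;t0] m2 []]).
Proof.
  wdl2_facts. pose proof larrow_mul2 as LL. pose proof larrow_lambda01_bar02 as QC.
  unfold larrow_diag in *; diag_simpl.
  slide 4. rw_diag 0 [] [] LL. rw_diag 1 [] [t2] QC. rw_diag 0 [] [] (eq_sym LL). slide 4.
  reflexivity.
Qed.

Lemma larrow_lambda01_mul2_02_bar12 :
  eval_diag A [t1;t2;t0;t2]
    (larrow_diag ++ [Lay [] l01 [t2]; Lay [t1;t0] m2 []; Lay [t1] l02 [t2];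
                     Lay [] m1 [t2;t0;t2]; Lay [t1] l12 [t0;t2]; Lay [t1;t2] e1 [t0;t2]]) =
  eval_diag A [t1;t2;t0;t2]
    (larrow_diag ++ [Lay [] l01 [t2]; Lay [t1;t0] m2 []; Lay [t1] l02 [t2]]).
Proof.
  wdl2_facts. pose proof larrow_mul2 as LL. pose proof larrow_lambda01_02_bar12 as QC.
  unfold larrow_diag in *; diag_simpl.
  slide 4. rw_diag 0 [] [] LL. rw_diag 1 [] [t2] QC. rw_diag 0 [] [] (eq_sym LL). slide 4.
  reflexivity.
Qed.

End ThreeMonads.

Section OneCells.
Variable K : TwoCat.
Notation vc := (@vcomp K).

Lemma mnd1_diag_eqs (A A' : ob K) (t t' v : c1b K) (m e m' e' p : c2 K) :
  is_mnd (Mnd A t m e) -> is_mnd (Mnd A' t' m' e') -> is_mnd1 (Mnd A t m e) (Mnd A' t' m' e') v p ->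
  wf1b v A A' /\ hom2c A A' p [t';v] [v;t] /\
  eval_diag A [t';t';v] [Lay [] p []; Lay [] m' [v]] =
    eval_diag A [t';t';v] [Lay [v] m []; Lay [] p [t]; Lay [t'] p []] /\
  eval_diag A [v] [Lay [] p []; Lay [] e' [v]] = eval_diag A [v] [Lay [v] e []].
Proof.
  intros HM HM' [Wv [Hp [E1 E2]]].
  destruct (mnd_hom2c HM) as [Wt [Tm Te]]. destruct (mnd_hom2c HM') as [Wt' [Tm' Te']].
  simpl in *. unfold wl, wr, comp1b in *; simpl in *.
  assert (Tp : hom2c A A' p [t';v] [v;t]).
  { eapply hom2b_hom2c; [eassumption | chain_auto | chain_auto | ..].
    - eapply chain_cell2; eassumption. - eapply chain_bar2; eassumption.
    - eapply chain_cell2; eassumption. - eapply chain_bar2; eassumption. }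
  refine (conj Wv (conj Tp (conj _ _))).
  - transitivity (vc p (hcomp m' (bar v))); [symmetry; reify_eq|]. rewrite E1. reify_eq.
  - transitivity (vc p (hcomp e' (bar v))); [symmetry; reify_eq|]. rewrite E2. reify_eq.
Qed.

Lemma wdl1_diag_eq (A A' : ob K) (t s t' s' v : c1b K) (m e n h m' e' n' h' l l' xi zeta : c2 K) :
  is_wdl (Mnd A t m e) (Mnd A s n h) l -> is_wdl (Mnd A' t' m' e') (Mnd A' s' n' h') l' ->
  is_wdl1 (Mnd A t m e) (Mnd A s n h) l (Mnd A' t' m' e') (Mnd A' s' n' h') l' v xi zeta ->
  eval_diag A [t';s';v] [Lay [v] l []; Lay [] xi [s]; Lay [t'] zeta []] =
  eval_diag A [t';s';v] [Lay [v] n [t]; Lay [v;s] l []; Lay [v;s;t] h []; Lay [] zeta [t];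
                      Lay [s'] xi []; Lay [] l' [v]].
Proof.
  intros HW HW' [Hx [Hz E]].
  destruct (wdl_hom2c HW) as [Wt [Ws [Tm [Te [Tn [Th Tl]]]]]].
  destruct (wdl_hom2c HW') as [Wt' [Ws' [Tm' [Te' [Tn' [Th' Tl']]]]]].
  destruct HW as [_ [HT [HS _]]]. destruct HW' as [_ [HT' [HS' _]]].
  destruct (mnd1_diag_eqs HT HT' Hx) as [Wv [Tx _]].
  destruct (mnd1_diag_eqs HS HS' Hz) as [_ [Tz _]].
  unfold wdl_bar in E. simpl in *. unfold wl, wr, comp1b in *; simpl in *.
  transitivity (vc (hcomp (bar v) l) (vc (hcomp xi (bar s)) (hcomp (bar t') zeta)));
    [symmetry; reify_eq|].
  rewrite E. reify_eq.
Qed.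

Lemma comp1b_id1b_l (v : c1b K) (A B : ob K) : wf1b v A B -> comp1b (id1b B) v = v.
Proof.
  intros W. pose proof (hom2c_id1l (hom2c_bar W)) as Eb.
  destruct v as [c b], W as [[W1 W2] _]; cbn in *.
  unfold comp1b, id1b; cbn. rewrite Eb, <- W2, comp1_id1l. reflexivity.
Qed.

Lemma comp1b_id1b_r (v : c1b K) (A B : ob K) : wf1b v A B -> comp1b v (id1b A) = v.
Proof.
  intros W. pose proof (hom2c_id1r (hom2c_bar W)) as Eb.
  destruct v as [c b], W as [[W1 W2] _]; cbn in *.
  unfold comp1b, id1b; cbn. rewrite Eb, <- W1, comp1_id1r. reflexivity.
Qed.

Lemma wdl2_same_base (S0 S1 S2 : mnd K) l01 l02 l12 :
  is_wdl2 S0 S1 S2 l01 l02 l12 -> m0 S1 = m0 S0 /\ m0 S2 = m0 S0.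
Proof. intros [[E1 _] [[E2 _] _]]. auto. Qed.

End OneCells.

Section Compatibility.
Variable K : TwoCat.
Variables (A A' : ob K) (t0 t1 t2 u0 u1 u2 v : c1b K).
Variables (m0 e0 m1 e1 m2 e2 n0 f0 n1 f1 n2 f2 l01 l02 l12 k01 k02 k12 x0 x1 x2 : c2 K).
Hypothesis H : is_wdl2 (Mnd A t0 m0 e0) (Mnd A t1 m1 e1) (Mnd A t2 m2 e2) l01 l02 l12.
Hypothesis H' : is_wdl2 (Mnd A' u0 n0 f0) (Mnd A' u1 n1 f1) (Mnd A' u2 n2 f2) k01 k02 k12.
Hypothesis Hv : is_wdl2_1 (Mnd A t0 m0 e0) (Mnd A t1 m1 e1) (Mnd A t2 m2 e2) l01 l02 l12
   (Mnd A' u0 n0 f0) (Mnd A' u1 n1 f1) (Mnd A' u2 n2 f2) k01 k02 k12 v x0 x1 x2.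

Ltac wdl2_1_facts :=
  let H01 := fresh "H01" in let H02 := fresh "H02" in let H12 := fresh "H12" in
  destruct H as [H01 [H02 [H12 _]]];
  destruct (wdl_hom2c H01) as [Wt1 [Wt0 [Tm1 [Te1 [Tm0 [Te0 Tl01]]]]]];
  destruct (wdl_hom2c H02) as [Wt2 [_ [Tm2 [Te2 [_ [_ Tl02]]]]]];
  destruct (wdl_hom2c H12) as [_ [_ [_ [_ [_ [_ Tl12]]]]]];
  let H01' := fresh "H01'" in let H02' := fresh "H02'" in let H12' := fresh "H12'" in
  destruct H' as [H01' [H02' [H12' _]]];
  destruct (wdl_hom2c H01') as [Wu1 [Wu0 [Tn1 [Tf1 [Tn0 [Tf0 Tk01]]]]]];
  destruct (wdl_hom2c H02') as [Wu2 [_ [Tn2 [Tf2 [_ [_ Tk02]]]]]];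
  destruct (wdl_hom2c H12') as [_ [_ [_ [_ [_ [_ Tk12]]]]]];
  let V1 := fresh "V1" in let V2 := fresh "V2" in let V3 := fresh "V3" in
  destruct Hv as [V1 [V2 V3]];
  pose proof (wdl1_diag_eq H01 H01' V1) as Wd01;
  pose proof (wdl1_diag_eq H02 H02' V2) as Wd02;
  pose proof (wdl1_diag_eq H12 H12' V3) as Wd12;
  destruct (wdl_diag_eqs H01) as [_ [_ [W3_01 _]]];
  destruct (wdl_diag_eqs H01') as [_ [_ [W3_01' _]]];
  destruct V1 as [Hx1 [Hx0 _]]; destruct V2 as [Hx2 _];
  destruct H01 as [_ [HM1 [HM0 _]]]; destruct H02 as [_ [HM2 _]];
  destruct H01' as [_ [HN1 [HN0 _]]]; destruct H02' as [_ [HN2 _]];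
  destruct (mnd1_diag_eqs HM1 HN1 Hx1) as [Wv [Tx1 [Mx1 Ux1]]];
  destruct (mnd1_diag_eqs HM0 HN0 Hx0) as [_ [Tx0 [Mx0 Ux0]]];
  destruct (mnd1_diag_eqs HM2 HN2 Hx2) as [_ [Tx2 [Mx2 Ux2]]].

Definition xi_diag := [Lay [] x1 [t0;t2]; Lay [u1] x0 [t2]; Lay [u1;u0] x2 []].
Definition larrow_lambda01_v_diag :=
  map (whisker_layer [v] []) (larrow_diag t0 t1 t2 m2 e2 l02 l12) ++ [Lay [v] l01 [t2]].

(* The [xi_i] carry [larrow'102] across [v], where it is absorbed by
   [larrow012 . l01 s2]. *)
Lemma xi_larrow102_absorb :
  eval_diag A [u1;u0;u2;v]
    (larrow_lambda01_v_diag ++ xi_diag ++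
     map (whisker_layer [] [v]) (larrow102_diag u0 u1 u2 n2 f2 k02 k12)) =
  eval_diag A [u1;u0;u2;v] (larrow_lambda01_v_diag ++ xi_diag).
Proof.
  pose proof (larrow_lambda01_mul2_bar02 H) as HA1.
  pose proof (larrow_lambda01_mul2_02_bar12 H) as HA2.
  pose proof (larrow_lambda01 H) as HLc. pose proof (larrow_idem H) as HL3.
  wdl2_1_facts. unfold larrow_lambda01_v_diag, xi_diag, larrow_diag, larrow102_diag in *.
  diag_simpl.
  rw_diag 7 [u1;u0] [] Mx2. slide 6. slide 5. slide 9.
  rw_diag 0 [v] [] (eq_sym HA1). slide 8. slide 7. slide 6.
  rw_diag 7 [u1] [t2] (eq_sym Wd02). slide 6. slide 10. slide 9.
  rw_diag 0 [v] [] (eq_sym HA2). rw_diag 7 [] [t0;t2] (eq_sym Wd12).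
  slide 11. slide 10. slide 9. rw_diag 8 [] [t1;t0;t2] Ux2.
  rw_diag 4 [v] [] (eq_sym HLc). rw_diag 0 [v] [] HL3.
  reflexivity.
Qed.

Let S0 := Mnd A t0 m0 e0. Let S1 := Mnd A t1 m1 e1. Let S2 := Mnd A t2 m2 e2.
Let S0' := Mnd A' u0 n0 f0. Let S1' := Mnd A' u1 n1 f1. Let S2' := Mnd A' u2 n2 f2.

Lemma xi012_phi1_02_comm :
  vcomp (wl (id1b A') (xi012 S0 S1 S2 l01 l02 l12 S0' S1' v x0 x1 x2))
        (wr (phi1_02 S0' S1' S2' k01 k02 k12) v) =
  vcomp (wl v (phi1_02 S0 S1 S2 l01 l02 l12))
        (wr (xi02 S0 S2 l02 S0' v x0 x2) (id1b A)).
Proof.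
  pose proof xi_larrow102_absorb as HKL. pose proof (larrow_lambda01 H') as HLc'.
  pose proof (phi1_02_bar02 H) as HQ.
  unfold larrow_lambda01_v_diag, xi_diag, larrow_diag, larrow102_diag in *.
  cbn [map app] in HKL. unfold whisker_layer in HKL. cbn [app lay_left lay_cell lay_right] in HKL.
  wdl2_1_facts.
  unfold xi012, xi02, phi1_02, lbar012, larrow012, wdl_bar, wl, wr, comp1b, id1b,
    S0, S1, S2, S0', S1', S2'.
  cbn [Defs.mt Defs.m0 Defs.mmu Defs.meta Defs.bar Defs.cell].
  etransitivity; [reify|]. etransitivity; [|symmetry; reify]. diag_simpl.
  rw_diag 14 [] [u2;v] (eq_sym W3_01'). rw_diag 10 [] [v] HLc'. slide 9.
  rw_diag 4 [] [t2] (eq_sym Wd01). rw_diag 0 [] [] HKL.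
  symmetry.
  rw_diag 0 [v] [] HQ. rw_diag 4 [v] [t2] (eq_sym W3_01). rw_diag 5 [] [t0;t2] (eq_sym Ux1).
  slide 6. slide 7. reflexivity.
Qed.

End Compatibility.

Unset Implicit Arguments.
Set Strict Implicit.

Theorem lemma4p4 (K : TwoCat) (S0 S1 S2 S0' S1' S2' : mnd K)
  (l01 l02 l12 l01' l02' l12' : c2 K) (v : c1b K) (x0 x1 x2 : c2 K)
  (H : is_wdl2 S0 S1 S2 l01 l02 l12)
  (H' : is_wdl2 S0' S1' S2' l01' l02' l12')
  (Hv : is_wdl2_1 S0 S1 S2 l01 l02 l12 S0' S1' S2' l01' l02' l12' v x0 x1 x2) :
  comp_mnd1 (v, xi012 S0 S1 S2 l01 l02 l12 S0' S1' v x0 x1 x2)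
            (id1b (m0 S0'), phi1_02 S0' S1' S2' l01' l02' l12')
  = comp_mnd1 (id1b (m0 S0), phi1_02 S0 S1 S2 l01 l02 l12)
              (v, xi02 S0 S2 l02 S0' v x0 x2).
Proof.
  destruct (wdl2_same_base H) as [E1 E2], (wdl2_same_base H') as [E1' E2'].
  destruct S0 as [A t0 m0 e0], S1 as [A1 t1 m1 e1], S2 as [A2 t2 m2 e2].
  destruct S0' as [B u0 n0 f0], S1' as [B1 u1 n1 f1], S2' as [B2 u2 n2 f2].
  cbn [Defs.m0] in *. subst A1 A2 B1 B2.
  assert (Wv : wf1b v A B) by (destruct Hv as [[[W _] _] _]; exact W).
  unfold comp_mnd1. cbn [Defs.m0].
  rewrite (comp1b_id1b_l Wv), (comp1b_id1b_r Wv).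
  f_equal. exact (xi012_phi1_02_comm H H' Hv).
Qed.
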